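(* For every positive integer $r$ and indices $a_1,b_1,\dots,b_r\in\{1,\dots,n\}$, the following holds in $\mathcal{M}=\bar A/J$: $$\partial_{a_1}x^{b_1}x^{b_2}\cdots x^{b_r}+J=\sum_{c_2,\dots,c_r}S^{b_1b_2\cdots b_r}_{a_1c_2\cdots c_r}(H+r-1)\,x^{c_2}x^{c_3}\cdots x^{c_r}+J,$$ where $S$ is defined by $S_a^b(K)=\delta_a^b$ and, for $r\ge2$, $$S^{b_1\cdots b_r}_{a_1\cdots a_r}(K)=\delta^{b_1}_{a_1}\cdots\delta^{b_r}_{a_r}+\sum_tR^{b_1t}_{a_1a_2}(K-r+1)\,S^{b_2\cdots b_r}_{ta_3\cdots a_r}(K),$$ equivalently $S^{b_1\cdots b_r}_{a_1\cdots a_r}(H)=\delta^{b_1}_{a_1}\cdots\delta^{b_r}_{a_r}+R^{b_1c_2}_{a_1a_2}(H-r+1)\delta^{b_2}_{c_2}\delta^{b_3}_{a_3}\cdots\delta^{b_r}_{a_r}+R^{b_1c_2}_{a_1a_2}(H-r+1)R^{b_2c_3}_{c_2a_3}(H-r+2)\delta^{b_3}_{c_3}\delta^{b_4}_{a_4}\cdots\delta^{b_r}_{a_r}+\cdots+R^{b_1c_2}_{a_1a_2}(H-r+1)\cdots R^{b_{r-1}b_r}_{c_{r-1}a_r}(H-1)$ (summing over repeated indices).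
   Context: $W_\eta(2n)$ is the unital associative $\mathbb{C}$-algebra generated by $x^a,\partial_a$ ($a=1,\dots,n$) and central $\eta_{ab},\eta^{ab}$ with $x^ax^b=x^bx^a$, $\partial_a\partial_b=\partial_b\partial_a$, $\partial_ax^b-x^b\partial_a=\delta_a^b$, $\eta_{ab}=\eta_{ba}$, $\sum_b\eta_{ab}\eta^{bc}=\delta_a^c$; $n\ge3$. Repeated upper/lower indices are summed; $x_a=\eta_{ab}x^b$, $\partial^a=\eta^{ab}\partial_b$, $E=\frac i2\partial_a\partial^a$, $F=\frac i2x_ax^a$, $H=-\frac12(x^a\partial_a+\partial_ax^a)$. $A$ is the localization of $W_\eta(2n)$ at nonzero polynomials in $H$; $\mathrm{II}=AE+FA$; $\bar A=A/\mathrm{II}$ with product $\bar w\diamond\bar z=\overline{\sum_{k\ge0}\frac1{k!}(\operatorname{ad}F)^k(w)\psi_k(H)^{-1}(\operatorname{ad}E)^k(z)}$, $(\operatorname{ad}X)(y)=Xy-yX$, $\psi_0=1$, $\psi_k(H)=\prod_{j=1}^k(H+1+j-2k)$. In $\bar A$ bars are dropped and $\diamond$ is written as juxtaposition; elements $g(H)\in\mathbb{C}[\eta](H)$ are identified with their classes, and $x^a g(H)=g(H+1)x^a$, $\partial_a g(H)=g(H-1)\partial_a$ in $\bar A$. The rational dynamical $R$-matrix is $R^{bd}_{ac}(H)=\delta^b_c\delta^d_a+\eta_{ac}\eta^{bd}\frac1{H+1}$, so that $\partial_ax^b=\delta_a^b+R^{bd}_{ac}(H)x^c\partial_d$ in $\bar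 A$. $J=\sum_a\bar A\,\partial_a$ is the left ideal generated by the $\partial_a$, and $\mathcal{M}=\bar A/J$. *)

From HB Require Import structures.
From mathcomp Require Import all_boot all_order all_algebra.
Set Implicit Arguments. Unset Strict Implicit. Unset Printing Implicit Defensive.
Import Order.TTheory GRing.Theory Num.Theory.
Local Open Scope ring_scope.

Section Reduction.
Variables (A : unitRingType) (n : nat).
Variables (eta_lo eta_up : 'I_n -> 'I_n -> A).

Definition kdelta (b a : 'I_n) : A := (b == a)%:R.

Definition Rmat (b d a c : 'I_n) (K : A) : A :=
  kdelta b c * kdelta d a + eta_lo a c * eta_up b d * (K + 1)^-1.

Definition deltas (bs as_ : seq 'I_n) : A :=
  \prod_(p <- zip bs as_) kdelta p.1 p.2.

Fixpoint Smat (bs as_ : seq 'I_n) (K : A) {struct bs} : A :=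
  match bs with
  | [::] => 0
  | b1 :: bt =>
    match bt, as_ with
    | [::], [:: a1] => kdelta b1 a1
    | _ :: _, a1 :: a2 :: atl =>
        deltas bs as_ +
        \sum_(t < n) Rmat b1 t a1 a2 (K - (size bs).-1%:R) * Smat bt (t :: atl) K
    | _, _ => 0
    end
  end.

End Reduction.

From HB Require Import structures.
From mathcomp Require Import all_boot all_order all_algebra.
Import Order.TTheory GRing.Theory Num.Theory.
Set Implicit Arguments.
Unset Strict Implicit.
Unset Printing Implicit Defensive.
Local Open Scope ring_scope.

(* Reordering d_a x^{b_1} by the
   R-matrix relation gives delta^{b_1}_a plus terms R x^c d_e; by induction
   d_e x^{b_2}...x^{b_r} is congruent modulo the left ideal J to its normal
   form with coefficients S(H + r - 2), and moving x^c to the right of those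
   coefficients shifts H to H + 1.  The deltas and the R-sum so obtained are
   exactly the two terms of the recursion defining S. *)

Lemma sum_tuple0 (V : nmodType) (I : finType) (F : seq I -> V) :
  \sum_(t : 0.-tuple I) F t = F [::].
Proof.
rewrite (eq_bigr (fun=> F [::])) => [|t _]; last by rewrite tuple0.
by rewrite sumr_const card_tuple expn0.
Qed.

Lemma sum_tupleS (V : nmodType) (I : finType) {k} (F : seq I -> V) :
  \sum_(t : k.+1.-tuple I) F t = \sum_(c : I) \sum_(t : k.-tuple I) F (c :: t).
Proof.
rewrite pair_big /=.
rewrite (reindex (fun p : I * k.-tuple I => cons_tuple p.1 p.2)) //=.
exists (fun t => (thead t, behead_tuple t)) => [[c t] _|t _] /=.
  by congr pair; apply: val_inj.
by rewrite [in RHS](tuple_eta t); apply: val_inj.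
Qed.

Lemma mulr_shiftV (R : unitRingType) (u v y : R) :
  u \is a GRing.unit -> v \is a GRing.unit -> y * u = v * y ->
  y * u^-1 = v^-1 * y.
Proof.
move=> Uu Uv yu.
by rewrite -[LHS]mul1r -(mulVr Uv) -mulrA (mulrA v) -yu -mulrA (mulrA y) mulrK.
Qed.

Section LeftIdeal.
Variables (R : pzRingType) (I : finType) (g : I -> R).

Definition in_lideal (z : R) := exists y : I -> R, z = \sum_i y i * g i.

Lemma in_lideal0 : in_lideal 0.
Proof. by exists (fun=> 0); rewrite big1 // => i _; rewrite mul0r. Qed.

Lemma in_lidealD z w : in_lideal z -> in_lideal w -> in_lideal (z + w).
Proof.
move=> [y1 ->] [y2 ->]; exists (fun i => y1 i + y2 i).
by rewrite -big_split; apply: eq_bigr => i _; rewrite mulrDl.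
Qed.

Lemma in_lidealMl c z : in_lideal z -> in_lideal (c * z).
Proof.
move=> [y ->]; exists (fun i => c * y i).
by rewrite mulr_sumr; apply: eq_bigr => i _; rewrite mulrA.
Qed.

Lemma in_lideal_sum (J : finType) (F : J -> R) :
  (forall j, in_lideal (F j)) -> in_lideal (\sum_j F j).
Proof. by move=> FJ; elim/big_ind: _ => //; [exact: in_lideal0 | exact: in_lidealD]. Qed.

Lemma in_lideal_gen i : in_lideal (g i).
Proof.
exists (fun j => (i == j)%:R).
rewrite (bigD1 i) //= eqxx mul1r big1 ?addr0 // => j.
by rewrite eq_sym => /negbTE ->; rewrite mul0r.
Qed.

End LeftIdeal.

Section Deltas.
Variables (A : unitRingType) (n : nat).

Lemma kdeltaC (a b : 'I_n) : kdelta A a b = kdelta A b a.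
Proof. by rewrite /kdelta eq_sym. Qed.

Lemma commr_deltas (y : A) (bs as_ : seq 'I_n) : GRing.comm y (deltas A bs as_).
Proof. by apply: commr_prod => i _; apply: commr_nat. Qed.

Lemma deltas_cons (b : 'I_n) bs a as_ :
  deltas A (b :: bs) (a :: as_) = kdelta A b a * deltas A bs as_.
Proof. by rewrite /deltas /= big_cons. Qed.

Lemma sum_deltas (F : seq 'I_n -> A) (bs : seq 'I_n) k : size bs = k ->
  \sum_(cs : k.-tuple 'I_n) deltas A bs cs * F cs = F bs.
Proof.
elim: bs k F => [|b bs IH] [|k] F //=.
  by rewrite (sum_tuple0 (fun s => deltas A [::] s * F s)) /deltas big_nil mul1r.
move=> [size_bs].
rewrite (sum_tupleS (fun s => deltas A (b :: bs) s * F s)).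
under eq_bigr => c _.
  under eq_bigr => t _ do rewrite deltas_cons -mulrA.
  rewrite -mulr_sumr (IH k (fun s => F (c :: s)) size_bs).
over.
rewrite (bigD1 b) //= /kdelta eqxx mul1r big1 ?addr0 // => c.
by rewrite eq_sym => /negbTE ->; rewrite mul0r.
Qed.

End Deltas.

Section Reduction.
Variables (A : unitRingType) (n : nat) (x d : 'I_n -> A) (H : A).
Variables (eta_lo eta_up : 'I_n -> 'I_n -> A).
Hypothesis eta_lo_central : forall a b (y : A), eta_lo a b * y = y * eta_lo a b.
Hypothesis eta_up_central : forall a b (y : A), eta_up a b * y = y * eta_up a b.
Hypothesis hH_unit : forall k : int, H + k%:~R \is a GRing.unit.
Hypothesis hxH : forall a, x a * H = (H + 1) * x a.
Hypothesis hdx : forall a b, d a * x b =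
  kdelta A a b + \sum_(c < n) \sum_(e < n) Rmat eta_lo eta_up b e a c H * x c * d e.

Local Notation Rmat := (Rmat eta_lo eta_up).
Local Notation Smat := (Smat eta_lo eta_up).

Lemma SmatE b1 b2 bt a1 a2 atl K :
  Smat (b1 :: b2 :: bt) (a1 :: a2 :: atl) K =
  deltas A (b1 :: b2 :: bt) (a1 :: a2 :: atl) +
  \sum_(t < n) Rmat b1 t a1 a2 (K - (size bt).+1%:R) * Smat (b2 :: bt) (t :: atl) K.
Proof. by []. Qed.

Lemma addr_intB (j : int) m : H + j%:~R - m%:R = H + (j - m%:Z)%:~R.
Proof. by rewrite rmorphB /= addrA. Qed.

Lemma x_shiftHV c (j : int) : x c * (H + j%:~R)^-1 = (H + (j + 1)%:~R)^-1 * x c.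
Proof.
apply: mulr_shiftV => //.
by rewrite mulrDr hxH commr_int rmorphD /= rmorph1 !mulrDl addrAC addrA.
Qed.

Lemma x_Rmat c b t a a' (j : int) :
  x c * Rmat b t a a' (H + j%:~R) = Rmat b t a a' (H + (j + 1)%:~R) * x c.
Proof.
have succ_int i : H + i%:~R + 1 = H + (i + 1)%:~R by rewrite rmorphD rmorph1 addrA.
rewrite /Rmat mulrDr mulrDl; congr (_ + _).
  by rewrite /kdelta -natrM; apply: commr_nat.
rewrite -!mulrA (mulrA (x c)) -eta_lo_central -mulrA (mulrA (x c)) -eta_up_central.
by rewrite !succ_int -mulrA x_shiftHV.
Qed.

Lemma x_Smat c bs as_ (j : int) :
  x c * Smat bs as_ (H + j%:~R) = Smat bs as_ (H + (j + 1)%:~R) * x c.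
Proof.
elim: bs as_ j => [|b1 [|b2 bt] IH] as_ j; first by rewrite /= mulr0 mul0r.
  by case: as_ => [|a1 [|a2 atl]]; rewrite /= ?mulr0 ?mul0r //; apply: commr_nat.
case: as_ => [|a1 [|a2 atl]]; try by rewrite /= mulr0 mul0r.
rewrite !SmatE mulrDr mulrDl commr_deltas; congr (_ + _).
rewrite mulr_sumr mulr_suml; apply: eq_bigr => t _.
by rewrite !addr_intB mulrA x_Rmat -mulrA IH mulrA addrAC.
Qed.

Definition normal_form k bs a K :=
  \sum_(cs : k.-tuple 'I_n) Smat bs (a :: cs) K * \prod_(c <- cs) x c.

Lemma x_normal_form c k bs t :
  x c * normal_form k bs t (H + k%:R) =
  \sum_(cs : k.-tuple 'I_n) Smat bs (t :: cs) (H + k.+1%:R) * (x c * \prod_(c' <- cs) x c').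
Proof.
rewrite mulr_sumr; apply: eq_bigr => cs _.
have shift_k : H + (k%:Z + 1)%:~R = H + k.+1%:R by rewrite intrD natr1.
by rewrite mulrA (x_Smat c bs (t :: cs) k) shift_k mulrA.
Qed.

Lemma normal_form_cons k b1 rest a K : size rest = k.+1 ->
  normal_form k.+1 (b1 :: rest) a K =
  kdelta A b1 a * \prod_(b <- rest) x b +
  \sum_(c < n) \sum_(t < n) Rmat b1 t a c (K - k.+1%:R) *
    \sum_(cs : k.-tuple 'I_n) Smat rest (t :: cs) K * (x c * \prod_(c' <- cs) x c').
Proof.
case: rest => [|b2 bt] // [size_bt].
rewrite /normal_form (sum_tupleS (fun s => Smat (b1 :: b2 :: bt) (a :: s) K * \prod_(c <- s) x c)).
transitivity (\sum_(c < n) \sum_(cs : k.-tuple 'I_n)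
   (kdelta A b1 a * (deltas A (b2 :: bt) (c :: cs) * \prod_(c' <- c :: cs) x c') +
    \sum_(t < n) Rmat b1 t a c (K - k.+1%:R) *
      (Smat (b2 :: bt) (t :: cs) K * (x c * \prod_(c' <- cs) x c')))).
  apply: eq_bigr => c _; apply: eq_bigr => cs _.
  rewrite SmatE deltas_cons size_bt mulrDl mulr_suml big_cons -mulrA.
  by congr (_ + _); apply: eq_bigr => t _; rewrite -mulrA.
under [LHS]eq_bigr => c _ do rewrite big_split.
rewrite big_split; congr (_ + _).
  rewrite -(sum_tupleS (fun s => kdelta A b1 a * (deltas A (b2 :: bt) s * \prod_(c <- s) x c))).
  by rewrite -mulr_sumr (sum_deltas (fun s => \prod_(c <- s) x c)) //= size_bt.
apply: eq_bigr => c _; rewrite exchange_big; apply: eq_bigr => t _.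
by rewrite mulr_sumr.
Qed.

Lemma d_x_normal_form a b : in_lideal d (d a * x b - normal_form 0 [:: b] a (H + 0%:R)).
Proof.
rewrite /normal_form (sum_tuple0 (fun s => Smat [:: b] (a :: s) (H + 0%:R) * \prod_(c <- s) x c)).
rewrite big_nil mulr1 hdx kdeltaC addrAC subrr add0r.
by do 2![apply: in_lideal_sum => ?]; apply/in_lidealMl/in_lideal_gen.
Qed.

Lemma d_monomial_cons k b1 rest a : size rest = k.+1 ->
  d a * \prod_(b <- b1 :: rest) x b - normal_form k.+1 (b1 :: rest) a (H + k.+1%:R) =
  \sum_(c < n) \sum_(e < n) Rmat b1 e a c H * x c *
    (d e * \prod_(b <- rest) x b - normal_form k rest e (H + k%:R)).
Proof.
move=> size_rest.
rewrite big_cons mulrA hdx mulrDl normal_form_cons // addrK kdeltaC opprD addrACA subrr add0r.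
rewrite mulr_suml -sumrB; apply: eq_bigr => c _.
rewrite mulr_suml -sumrB; apply: eq_bigr => e _.
by rewrite mulrBr -(mulrA _ (x c) (normal_form _ _ _ _)) x_normal_form !mulrA.
Qed.

Lemma d_monomial_normal_form k bs a : size bs = k.+1 ->
  in_lideal d (d a * \prod_(b <- bs) x b - normal_form k bs a (H + k%:R)).
Proof.
elim: k bs a => [|k IH] [|b1 rest] a //= [size_rest].
  by case: rest size_rest => // _; rewrite big_seq1; apply: d_x_normal_form.
rewrite d_monomial_cons //.
by do 2![apply: in_lideal_sum => ?]; apply/in_lidealMl/IH.
Qed.

End Reduction.

Theorem mainTheorem11
  (A : unitRingType) (n : nat) (hn : (3 <= n)%N)
  (x d : 'I_n -> A) (H : A) (eta_lo eta_up : 'I_n -> 'I_n -> A)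
  (eta_lo_central : forall a b (y : A), eta_lo a b * y = y * eta_lo a b)
  (eta_up_central : forall a b (y : A), eta_up a b * y = y * eta_up a b)
  (eta_lo_sym : forall a b, eta_lo a b = eta_lo b a)
  (eta_inv : forall a c, \sum_(b < n) eta_lo a b * eta_up b c = kdelta A a c)
  (hxx : forall a b, x a * x b = x b * x a)
  (hdd : forall a b, d a * d b = d b * d a)
  (hH_unit : forall k : int, H + k%:~R \is a GRing.unit)
  (hxH : forall a, x a * H = (H + 1) * x a)
  (hdH : forall a, d a * H = (H - 1) * d a)
  (hdx : forall a b, d a * x b =
     kdelta A a b + \sum_(c < n) \sum_(e < n) Rmat eta_lo eta_up b e a c H * x c * d e) :
  forall (r : nat) (a1 : 'I_n) (bs : r.-tuple 'I_n), (0 < r)%N ->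
  exists y : 'I_n -> A,
    d a1 * \prod_(b <- bs) x b
    - \sum_(cs : (r.-1).-tuple 'I_n)
        Smat eta_lo eta_up bs (a1 :: cs) (H + (r.-1)%:R) * \prod_(c <- cs) x c
    = \sum_(a < n) y a * d a.
Proof.
move=> [|k] a1 bs // _.
exact: (d_monomial_normal_form eta_lo_central eta_up_central hH_unit hxH hdx a1 (size_tuple bs)).
Qed.
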